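(* Let $K$ be a field and $E$ a row-finite graph with a fixed choice of special edges. Let $x=x_1\dots x_m$ ($m\ge 1$) be a cycle in $E$ all of whose edges are special and which has an exit. Let $(F_x,\phi_x)$ be the extended representation graph associated to $x$ (regarded as a closed path in $E_d$ consisting only of real edges), and let $W=W(F_x,\phi_x)$ be the associated right $L(E)$-module. Then $W$ is not a simple $L(E)$-module, and $\operatorname{End}_{L(E)}(W)\cong K$ as rings.
   Context: Let $E=(E^0,E^1,s,r)$ be a row-finite directed graph (no vertex emits infinitely many edges). A vertex is regular if it emits at least one edge. For every regular vertex $v$ a fixed edge $e^v\in s^{-1}(v)$ is chosen; these edges are called special, all other edges nonspecial. A path of length $n\ge 1$ is a word $y_1\dots y_n$ of edges with $r(y_i)=s(y_{i+1})$; a path of length $0$ is a vertex $v$ with $s(v)=r(v)=v$. A cycle is a path $x_1\dots x_m$ of length $\ge1$ with $s(x_1)=r(x_m)$ and $s(x_i)\ne s(x_j)$ for $i\neq j$; an exit of it is an edge $e$ with $s(e)=s(x_i)$ and $e\ne x_i$ for some $i$. The double graph $E_d$ has vertex set $E^0$ and edges $\{e,e^*: e\in E^1\}$ with $s_d(e)=s(e)$, $r_d(e)=r(e)$, $s_d(e^* )=r(e)$, $r_d(e^* )=s(e)$; the $e$ are real edges, the $e^*$ ghost edges. For a path $p=e_1\dots e_n$ in $E$ set $p^*=e_n^*\dots e_1^*$. The set $X$ of basis paths consists of the following paths in $E_d$: all vertices $v\in E^0$; all $p$ and $p^*$ with $p$ a path of length $\ge1$ in $E$; all $pq^*$ with $p=e_1\dots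 e_k$, $q=f_1\dots f_n$ paths of length $\ge 1$ in $E$, $r(p)=r(q)$, and either $e_k\ne f_n$ or $e_k=f_n$ nonspecial. The Leavitt path algebra $L(E)$ is the $K$-algebra generated by $\{v,e,e^*: v\in E^0,e\in E^1\}$ subject to $uv=\delta_{uv}u$; $s(e)e=e=er(e)$, $r(e)e^*=e^*=e^*s(e)$; $e^*f=\delta_{ef}r(e)$; and $\sum_{e\in s^{-1}(v)}ee^*=v$ for every regular $v$. For $x=x_1\dots x_m$ a closed path of length $\ge1$ in $E_d$ consisting only of real edges (or only of ghost edges), and $1\le i\le m$, let $X_i$ be the set of basis paths $y=y_1\dots y_n$ of length $n\ge 1$ such that $x_iy_1$ is a basis path and $y_1\ne x_{i+1}$ (with $x_{m+1}=x_1$). The graph $F_x$ has vertices $w_i$ ($1\le i\le m$) and $w_{i,y}$ ($1\le i\le m$, $y\in X_i$), all distinct, and edges $f_i$ from $w_{i-1}$ to $w_i$ (with $w_0=w_m$) and $f_{i,y}$ with range $w_{i,y}$ and source $w_i$ if $|y|=1$, resp. $w_{i,y_1\dots y_{n-1}}$ if $y=y_1\dots y_n$, $n\ge2$. The homomorphism $\phi_x:F_x\to E_d$ is given by $\phi_x(w_i)=r_d(x_i)$, $\phi_x(w_{i,y})=r_d(y)$, $\phi_x(f_i)=x_i$, $\phi_x(f_{i,y})=$ the last edge of $y$. For such a pair $(F,\phi)$ (a graph $F$ with a graph homomorphism $\phi:F\to E_d$), $W(F,\phi)$ is the $K$-vector space with basis $F^0$, made into a right $L(E)$-module by the following action on basis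 vertices $w\in F^0$ (for $v\in E^0$, $e\in E^1$): $w.v=w$ if $\phi(w)=v$ and $0$ otherwise; $w.e=r(f)$ if some $f\in s^{-1}(w)$ has $\phi(f)=e$, $w.e=s(f)$ if some $f\in r^{-1}(w)$ has $\phi(f)=e^*$, and $w.e=0$ otherwise; $w.e^*=r(f)$ if some $f\in s^{-1}(w)$ has $\phi(f)=e^*$, $w.e^*=s(f)-T$ if $e$ is special and some $f\in r^{-1}(w)$ has $\phi(f)=e$, where $T=\sum r(p)$ over all paths $p$ in $F$ starting at $s(f)$ with $\phi(p)=dd^*$ for some $d\in s^{-1}(s(e))\setminus\{e\}$, and $w.e^*=0$ otherwise. (This extends uniquely to a right $L(E)$-module structure.) *)

From HB Require Import structures.
From mathcomp Require Import all_boot all_algebra.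
From mathcomp Require Import finmap.
From mathcomp.multinomials Require Import monalg.
From Stdlib Require Import ClassicalEpsilon.

Set Implicit Arguments.
Unset Strict Implicit.
Unset Printing Implicit Defensive.

Import GRing.Theory.
Local Open Scope ring_scope.

Definition pick_some {T : Type} (P : T -> Prop) : option T :=
  match excluded_middle_informative (exists t, P t) with
  | left H => Some (proj1_sig (constructive_indefinite_description _ H))
  | right _ => None
  end.

(* a duplicate-free enumeration of {t | P t} if this set is finite,
   and [::] otherwise *)
Definition fin_enum {T : eqType} (P : T -> Prop) : seq T :=
  odflt [::] (pick_some (fun l : seq T => uniq l /\ forall t, P t <-> t \in l)).

Section Graph.
Variables (V Ed : choiceType) (s r : Ed -> V) (sp : V -> Ed).

Definition row_finite : Prop :=
  forall v : V, exists l : seq Ed, forall e, e \in l <-> s e = v.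

Definition regular (v : V) : Prop := exists e, s e = v.

(* sp v is the chosen special edge e^v of a regular vertex v *)
Definition special_choice : Prop := forall v, regular v -> s (sp v) = v.

Definition special (e : Ed) : bool := e == sp (s e).

(* edges of the double graph E_d: (e, false) = e (real),
   (e, true) = e^* (ghost) *)
Definition dedge := (Ed * bool)%type.
Definition sd (a : dedge) : V := if a.2 then r a.1 else s a.1.
Definition rd (a : dedge) : V := if a.2 then s a.1 else r a.1.

Definition adj_ok (a b : dedge) : bool :=
  [&& rd a == sd b, ~~ (a.2 && ~~ b.2)
    & (~~ a.2 && b.2) ==> ((a.1 != b.1) || ~~ special a.1)].

(* basis paths of length >= 1: exactly the words p, p^*, p q^* *)
Definition basis_word (y : seq dedge) : bool :=
  if y is a :: y' then path adj_ok a y' else false.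

Definition is_cycle (m : nat) (x : 'I_m -> Ed) : Prop :=
  [/\ (0 < m)%N,
      forall i, r (x i) = s (x (ordS i)) &
      forall i j, s (x i) = s (x j) -> i = j].

Definition has_exit (m : nat) (x : 'I_m -> Ed) : Prop :=
  exists e i, s e = s (x i) /\ e <> x i.

Record rep_graph := RepGraph {
  FV : choiceType;
  FE : choiceType;
  srcF : FE -> FV;
  rngF : FE -> FV;
  phiV : FV -> V;
  phiE : FE -> dedge }.

Inductive gen := GV of V | GE of Ed | GS of Ed.

Section Module.
Variables (K : fieldType) (F : rep_graph).

Definition Wsp := {malg K[FV F]}.

Definition Tsum (e : Ed) (f : FE F) : Wsp :=
  \sum_(pr <- fin_enum (fun pr : FE F * FE F =>
      [/\ srcF pr.1 = srcF f, rngF pr.1 = srcF pr.2 &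
          exists d, [/\ phiE pr.1 = (d, false), phiE pr.2 = (d, true),
                        s d = s e & d <> e]]))
     << rngF pr.2 >>.

Definition act_basis (w : FV F) (g : gen) : Wsp :=
  match g with
  | GV v => if phiV w == v then << w >> else 0
  | GE e =>
      match pick_some (fun f => srcF f = w /\ phiE f = (e, false)) with
      | Some f => << rngF f >>
      | None =>
        match pick_some (fun f => rngF f = w /\ phiE f = (e, true)) with
        | Some f => << srcF f >>
        | None => 0
        end
      end
  | GS e =>
      match pick_some (fun f => srcF f = w /\ phiE f = (e, true)) with
      | Some f => << rngF f >>
      | None =>
        match pick_some (fun f => rngF f = w /\ phiE f = (e, false)) with
        | Some f => if special e then << srcF f >> - Tsum e f else 0
        | None => 0
        end
      end
  end.

Definition act (g : gen) (u : Wsp) : Wsp :=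
  \sum_(w <- msupp u) u@_w *: act_basis w g.

Definition submodule (U : Wsp -> Prop) : Prop :=
  [/\ U 0,
      forall u1 u2, U u1 -> U u2 -> U (u1 + u2),
      forall (k : K) u, U u -> U (k *: u) &
      forall g u, U u -> U (act g u)].

Definition simple_module : Prop :=
  (exists u : Wsp, u <> 0) /\
  forall U, submodule U -> (forall u, U u -> u = 0) \/ (forall u, U u).

Definition is_endo (h : Wsp -> Wsp) : Prop :=
  [/\ forall u1 u2, h (u1 + u2) = h u1 + h u2,
      forall (k : K) u, h (k *: u) = k *: h u &
      forall g u, h (act g u) = act g (h u)].

Definition End_iso_field : Prop :=
  exists Phi : K -> Wsp -> Wsp,
    [/\ forall a, is_endo (Phi a),
        forall h, is_endo h -> exists! a, forall u, h u = Phi a u,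
        forall a b u, Phi (a + b) u = Phi a u + Phi b u,
        forall a b u, Phi (a * b) u = Phi a (Phi b u) &
        forall u, Phi 1 u = u].

End Module.

Section Fx.
Variables (m : nat) (x : 'I_m -> Ed).

Definition real (e : Ed) : dedge := (e, false).

(* raw vertices: inl i = w_i ; inr (i, y) = w_{i,y}  (0-based i) *)
Definition Fraw := ('I_m + ('I_m * seq dedge))%type.

Definition inX (i : 'I_m) (y : seq dedge) : bool :=
  [&& basis_word y, basis_word [:: real (x i); head (real (x i)) y]
    & head (real (x i)) y != real (x (ordS i))].

Definition Fvalid (v : Fraw) : bool :=
  match v with inl _ => true | inr (i, y) => inX i y end.

Definition FxV := {v : Fraw | Fvalid v}.

Definition FxV_inl (i : 'I_m) : FxV := exist _ (inl i) isT.

(* every vertex has exactly one incoming edge (f_i into w_i, f_{i,y}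
   into w_{i,y}); we name each edge of F_x by its range vertex *)
Definition Fx_src (w : FxV) : FxV :=
  match sval w with
  | inl i => FxV_inl (ord_pred i)
  | inr (i, y) =>
      if size y == 1%N then FxV_inl i
      else insubd w (inr (i, belast (head (real (x i)) y) (behead y)) : Fraw)
  end.

Definition Fx_phiV (w : FxV) : V :=
  match sval w with
  | inl i => r (x i)
  | inr (i, y) => rd (last (real (x i)) y)
  end.

Definition Fx_phiE (f : FxV) : dedge :=
  match sval f with
  | inl i => real (x i)
  | inr (i, y) => last (real (x i)) y
  end.

Definition Fx : rep_graph := @RepGraph FxV FxV Fx_src id Fx_phiV Fx_phiE.

End Fx.
End Graph.

From mathcomp Require Import all_boot all_order all_algebra.
From mathcomp Require Import finmap.
From mathcomp.multinomials Require Import monalg.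
From Stdlib Require Import ClassicalEpsilon.

Set Implicit Arguments.
Unset Strict Implicit.
Unset Printing Implicit Defensive.
Import Order.TTheory GRing.Theory Num.Theory.
Local Open Scope fset_scope.
Local Open Scope ring_scope.

(* An endomorphism h of W is determined by h(w_j) for a single cycle vertex w_j:
   every vertex of F_x is reached from w_j along edges of F_x, and since F_x is
   deterministic the letter labelling an edge sends its source to its range.
   The vector u = h(w_j) is fixed by the idempotent r(x_j) and by the word
   x_{j+1} ... x_{j+m} going once around the cycle.  That word maps basis vectors
   to basis vectors or to 0, never moves a cycle vertex into the trees, and raises
   the weight (#real - #ghost letters of y) of tree vertices w_{i,y}; so no tree
   vertex of minimal weight can lie in the support of u.  Hence u = a w_j and
   h = a id.
   An exit e at s(x_j) is nonspecial since x_j is special.  The vectors supported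
   on the tree of vertices w_{j-1, e y} form a nonzero proper submodule: the only
   edge entering that tree is labelled e, and e^* does not leave it because e is
   nonspecial. *)

Lemma pick_someP (T : Type) (P : T -> Prop) t : pick_some P = Some t -> P t.
Proof.
by rewrite /pick_some; case: excluded_middle_informative => // H [<-]; apply: proj2_sig.
Qed.

Lemma pick_some_uniq (T : Type) (P : T -> Prop) t :
  P t -> (forall t', P t' -> t' = t) -> pick_some P = Some t.
Proof.
move=> Pt P_uniq; rewrite /pick_some; case: excluded_middle_informative => [H|[]].
  by congr Some; apply: P_uniq; apply: proj2_sig.
by exists t.
Qed.

Lemma fin_enumP (T : eqType) (P : T -> Prop) t : t \in fin_enum P -> P t.
Proof.
rewrite /fin_enum; case E: (pick_some _) => [l|] //=.
by move=> t_l; apply/(pick_someP E).2.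
Qed.

Lemma seq_argmin (T : eqType) (d : Order.disp_t) (R : orderType d) (f : T -> R)
    (s : seq T) :
  s != [::] -> exists2 z, z \in s & forall t, t \in s -> (f z <= f t)%O.
Proof.
move=> s_nnil; pose leT := [rel a b | (f a <= f b)%O].
have leT_trans : transitive leT by move=> b a c; apply: le_trans.
have := sort_sorted (fun a b => le_total (f a) (f b)) s.
have := mem_sort leT s; case: (sort leT s) => [|z s'] mem_s.
  by case: s s_nnil mem_s => // a s' _ /(_ a); rewrite mem_head.
move=> /(order_path_min leT_trans) /allP z_min.
exists z => [|t]; first by rewrite -mem_s mem_head.
by rewrite -mem_s in_cons => /predU1P[-> //|/z_min].
Qed.

Section MonomialOperators.
Variables (K : fieldType) (T : choiceType).
Local Notation W := {malg K[T]}.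

Lemma malgU_scale (c : K) (w : T) : << c *g w >> = c *: (<< w >> : W).
Proof. by apply/malgP => k; rewrite mcoeffZ !mcoeffU mulr_natr. Qed.

Lemma malg_basis_decomp (u : W) : u = \sum_(w <- msupp u) u@_w *: << w >>.
Proof. by rewrite {1}(monalgE u); apply: eq_bigr => w _; rewrite malgU_scale. Qed.

Lemma malg_supp1 (u : W) (w : T) :
  (forall z, z \in msupp u -> z = w) -> u = u@_w *: << w >>.
Proof.
move=> supp_w; apply/malgP => z; rewrite mcoeffZ mcoeffU.
case: eqVneq => [<-|wz]; first by rewrite mulr1.
by rewrite mulr0 mcoeff_outdom //; apply: contra wz => /supp_w ->.
Qed.

Variables (P : pred T) (wt : T -> int).

Definition raises (op : W -> W) : Prop :=
  forall w, op << w >> = 0 \/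
    exists2 t, op << w >> = << t >> & (P t -> P w /\ wt w < wt t).

Lemma raises_comp (op1 op2 : W -> W) :
  op2 0 = 0 -> raises op1 -> raises op2 -> raises (op2 \o op1).
Proof.
move=> op2_0 op1_raises op2_raises w /=.
case: (op1_raises w) => [->|[t1 -> Pt1]]; first by rewrite op2_0; left.
case: (op2_raises t1) => [->|[t -> Pt]]; first by left.
right; exists t => // /Pt[/Pt1[Pw w_t1] t1_t].
by split=> //; apply: lt_trans t1_t.
Qed.

Section LinearOperator.
Variable op : W -> W.
Hypotheses (opD : {morph op : u v / u + v}) (opZ : scalable op).

Lemma linop0 : op 0 = 0.
Proof. by have := opZ 0 0; rewrite !scale0r. Qed.

Lemma linop_basis_decomp (u : W) : op u = \sum_(w <- msupp u) u@_w *: op << w >>.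
Proof.
rewrite {1}(malg_basis_decomp u) (big_morph op opD linop0).
by apply: eq_bigr => w _; apply: opZ.
Qed.

Lemma linop_scalar_on_basis (a : K) :
  (forall w, op << w >> = a *: << w >>) -> forall u, op u = a *: u.
Proof.
move=> opU u; rewrite linop_basis_decomp [in RHS](malg_basis_decomp u) scaler_sumr.
by apply: eq_bigr => w _; rewrite opU !scalerA mulrC.
Qed.

(* A [P]-vertex of minimal weight in the support could only be hit from a
   [P]-vertex of even smaller weight. *)
Lemma raises_fixed_supp (u : W) :
  raises op -> op u = u -> forall z, z \in msupp u -> ~~ P z.
Proof.
move=> op_raises fix_u z0 z0u; apply/negP => Pz0.
have /(seq_argmin wt) [z] : [seq z <- msupp u | P z] != [::].
  by apply/eqP => /(congr1 (fun l => z0 \in l)); rewrite mem_filter Pz0 z0u.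
rewrite mem_filter => /andP[Pz zu] z_min.
suff : u@_z = 0 by move/eqP; rewrite mcoeff_eq0 zu.
rewrite -fix_u linop_basis_decomp raddf_sum big_seq; apply: big1 => w wu /=.
rewrite mcoeffZ; case: (op_raises w) => [->|[t -> Pt]]; first by rewrite mcoeff0 mulr0.
rewrite mcoeffU; move: Pt; case: eqVneq => [-> /(_ Pz)[Pw lt_wz]|]; last by rewrite mulr0.
by have := z_min w; rewrite mem_filter Pw wu => /(_ isT); rewrite leNgt lt_wz.
Qed.

End LinearOperator.
End MonomialOperators.

Definition letter {V Ed : choiceType} (a : dedge Ed) : gen V Ed :=
  if a.2 then GS V a.1 else GE V a.1.

Section RepresentationModule.
Variables (V Ed : choiceType) (s : Ed -> V) (sp : V -> Ed) (K : fieldType).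
Variable F : rep_graph V Ed.
Local Notation W := (Wsp K F).

Lemma actEw g (u : W) (d : {fset FV F}) : msupp u `<=` d ->
  act s sp g u = \sum_(w <- d) u@_w *: act_basis s sp K w g.
Proof.
move=> le_ud; rewrite /act; apply: big_fset_incl => // w _ /mcoeff_outdom ->.
by rewrite scale0r.
Qed.

Lemma actD g : {morph (act s sp g : W -> W) : u v / u + v}.
Proof.
move=> u v; rewrite (actEw _ (msuppD_le u v)).
rewrite (actEw _ (fsubsetUl (msupp u) (msupp v))) (actEw _ (fsubsetUr (msupp u) (msupp v))).
by rewrite -big_split; apply: eq_bigr => w _; rewrite mcoeffD scalerDl.
Qed.

Lemma actZ g : scalable (act s sp g : W -> W).
Proof.
move=> k u; rewrite (actEw _ (msuppZ_le k u)) /act scaler_sumr.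
by apply: eq_bigr => w _; rewrite mcoeffZ scalerA.
Qed.

Lemma act_basisE g w : act s sp g (<< w >> : W) = act_basis s sp K w g.
Proof. by rewrite /act msuppU oner_eq0 big_seq_fset1 mcoeffUU scale1r. Qed.

Lemma act_vertex_fixed_supp v (u : W) z :
  act s sp (GV Ed v) u = u -> z \in msupp u -> phiV z = v.
Proof.
move=> fix_u zu; apply/eqP; apply: contraTT zu => phz_v.
rewrite -mcoeff_eq0 -fix_u /act raddf_sum /=; apply/eqP/big1 => w _.
rewrite mcoeffZ /act_basis; case: eqP => [phw|_]; last by rewrite mcoeff0 mulr0.
by rewrite mcoeffU; case: eqVneq => [wz|]; [rewrite -wz phw eqxx in phz_v | rewrite mulr0].
Qed.

Definition acts (gs : seq (gen V Ed)) (u : W) : W :=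
  foldl (fun u g => act s sp g u) u gs.

Lemma actsD gs : {morph acts gs : u v / u + v}.
Proof. by elim: gs => [|g gs IH] u v //=; rewrite actD IH. Qed.

Lemma actsZ gs : scalable (acts gs).
Proof. by elim: gs => [|g gs IH] k u //=; rewrite actZ IH. Qed.

Lemma acts_cons g gs u : acts (g :: gs) u = acts gs (act s sp g u).
Proof. by []. Qed.

Lemma acts0 gs : acts gs 0 = 0.
Proof. exact: linop0 (actsZ gs). Qed.

Lemma endo_acts h gs u : is_endo s sp h -> h (acts gs u) = acts gs (h u).
Proof. by case=> _ _ hA; elim: gs u => [|g gs IH] u //=; rewrite IH hA. Qed.

Lemma scale_is_endo (a : K) : is_endo s sp (fun u : W => a *: u).
Proof.
split=> [u v|k u|g u]; first exact: scalerDr.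
  by rewrite !scalerA mulrC.
by rewrite actZ.
Qed.

Lemma End_iso_field_of_scalar (w : FV F) :
  (forall h, is_endo s sp h -> exists a : K, forall u : W, h u = a *: u) ->
  End_iso_field s sp K F.
Proof.
move=> endo_scalar; exists (fun a u => a *: u); split.
- exact: scale_is_endo.
- move=> h /endo_scalar[a ha]; exists a; split=> // b hb.
  have := hb << w >>; rewrite ha => /(congr1 (mcoeff w)).
  by rewrite !mcoeffZ mcoeffUU !mulr1.
- by move=> a b u; rewrite scalerDl.
- by move=> a b u; rewrite scalerA.
- by move=> u; rewrite scale1r.
Qed.

Definition deterministic : Prop :=
  forall f1 f2 : FE F, srcF f1 = srcF f2 -> phiE f1 = phiE f2 -> f1 = f2.

Section Deterministic.
Hypothesis F_det : deterministic.

Lemma act_basis_edge (f : FE F) : act_basis s sp K (srcF f) (letter (phiE f)) = << rngF f >>.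
Proof.
rewrite /letter; case fE: (phiE f) => [e []] /=;
  by rewrite (@pick_some_uniq _ _ f) // => f' [f'_src f'E]; apply: F_det; rewrite ?f'E.
Qed.

Lemma endo_scalar_edge h (a : K) (f : FE F) : is_endo s sp h ->
  h << srcF f >> = a *: << srcF f >> -> h << rngF f >> = a *: << rngF f >>.
Proof. by case=> _ _ hA h_src; rewrite -act_basis_edge -act_basisE hA h_src actZ. Qed.

End Deterministic.

Definition supported_in (S : pred (FV F)) (u : W) : Prop := {subset msupp u <= S}.

Section Support.
Variable S : pred (FV F).

Lemma supported0 : supported_in S 0.
Proof. by move=> w; rewrite msupp0 in_fset0. Qed.

Lemma supportedD u v : supported_in S u -> supported_in S v -> supported_in S (u + v).
Proof.
move=> Su Sv w /(fsubsetP (msuppD_le u v)).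
by rewrite in_fsetU => /orP[/Su|/Sv].
Qed.

Lemma supportedZ k u : supported_in S u -> supported_in S (k *: u).
Proof. by move=> Su w /(fsubsetP (msuppZ_le k u)) /Su. Qed.

Lemma supportedB u v : supported_in S u -> supported_in S v -> supported_in S (u - v).
Proof. by move=> Su Sv; apply: supportedD => // w; rewrite msuppN; apply: Sv. Qed.

Lemma supportedU w : S w -> supported_in S << w >>.
Proof. by move=> Sw z; rewrite msuppU oner_eq0 in_fset1 => /eqP ->. Qed.

Lemma supported_sum (I : eqType) (r : seq I) (G : I -> W) :
  (forall i, i \in r -> supported_in S (G i)) -> supported_in S (\sum_(i <- r) G i).
Proof.
by rewrite big_seq => SG; apply: big_ind => //; [apply: supported0 | apply: supportedD].
Qed.

Hypothesis S_child : forall f : FE F, S (srcF f) -> S (rngF f).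
Hypothesis S_parent :
  forall f : FE F, S (rngF f) -> (phiE f).2 || special s sp (phiE f).1 -> S (srcF f).

Lemma supported_act_basis w g : S w -> supported_in S (act_basis s sp K w g).
Proof.
move=> Sw; case: g => [v|e|e]; rewrite /act_basis.
- by case: ifP => _; [apply: supportedU | apply: supported0].
- case E1: (pick_some _) => [f|].
    by have [f_w _] := pick_someP E1; apply/supportedU/S_child; rewrite f_w.
  case E2: (pick_some _) => [f|]; last exact: supported0.
  by have [f_w fE] := pick_someP E2; apply/supportedU/S_parent; rewrite ?f_w ?fE.
- case E1: (pick_some _) => [f|].
    by have [f_w _] := pick_someP E1; apply/supportedU/S_child; rewrite f_w.
  case E2: (pick_some _) => [f|]; last exact: supported0.
  have [f_w fE] := pick_someP E2; case: ifP => e_sp; last exact: supported0.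
  have S_src : S (srcF f) by apply: S_parent; rewrite ?f_w // fE e_sp.
  apply: supportedB; first exact: supportedU.
  apply: supported_sum => -[f1 f2] /fin_enumP[/= f1_src f1_f2 _].
  by apply/supportedU/S_child; rewrite -f1_f2 S_child // f1_src.
Qed.

Lemma supported_submodule : submodule s sp (supported_in S).
Proof.
split; [exact: supported0 | exact: supportedD | exact: supportedZ |].
move=> g u Su; apply: supported_sum => w wu; apply: supportedZ.
exact: supported_act_basis (Su w wu).
Qed.

End Support.
End RepresentationModule.

Section ExtendedRepresentationGraph.
Variables (V Ed : choiceType) (s r : Ed -> V) (sp : V -> Ed) (K : fieldType).
Variables (m : nat) (x : 'I_m -> Ed).
Hypothesis x_cycle : is_cycle s r x.

Local Notation F := (Fx s r sp x).
Local Notation W := (Wsp K F).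
Local Notation src := (@Fx_src V Ed s r sp m x).
Local Notation label := (@Fx_phiE V Ed s r sp m x).
Local Notation cyc := (FxV_inl s r sp x).

Lemma cycle_gt0 : (0 < m)%N.
Proof. by case: x_cycle. Qed.

Lemma cycle_rs i : r (x i) = s (x (ordS i)).
Proof. by case: x_cycle. Qed.

Lemma cycle_s_inj i j : s (x i) = s (x j) -> i = j.
Proof. by case: x_cycle => _ _; apply. Qed.

Lemma val_iter_ordS n (j : 'I_m) : val (iter n (@ordS m) j) = ((j + n) %% m)%N.
Proof.
elim: n => [|n IH] /=; first by rewrite addn0 modn_small.
by rewrite IH addnS -addn1 modnDml addn1.
Qed.

Lemma iter_ordS_period (j : 'I_m) : iter m (@ordS m) j = j.
Proof. by apply: val_inj; rewrite val_iter_ordS modnDr modn_small. Qed.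

Lemma tree_inX (z : FxV s r sp x) i y : sval z = inr (i, y) -> inX s r sp x i y.
Proof. by case: z => v v_valid /= zE; rewrite zE in v_valid. Qed.

Variant Fx_vertex_spec (z : FxV s r sp x) : Type :=
  | CycleVertex k of z = cyc k
  | TreeVertex i y a of sval z = inr (i, rcons y a).

Lemma Fx_vertexP z : Fx_vertex_spec z.
Proof.
case zE: (sval z) => [k|[i [|b y]]].
- by apply: (@CycleVertex _ k); apply: val_inj.
- by move: (tree_inX zE).
- by apply: (@TreeVertex _ i (belast b y) (last b y)); rewrite -lastI.
Qed.

Lemma cyc_inj : injective cyc.
Proof. by move=> k1 k2 /(congr1 sval) []. Qed.

Lemma src_cyc k : src (cyc k) = cyc (ord_pred k).
Proof. exact: val_inj. Qed.

Lemma src_cycS k : src (cyc (ordS k)) = cyc k.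
Proof. by rewrite src_cyc ordSK. Qed.

Lemma inX_rcons i b y a : inX s r sp x i (rcons (b :: y) a) -> inX s r sp x i (b :: y).
Proof.
by rewrite /inX /basis_word /= rcons_path => /and3P[/andP[b_y _] ? ?]; apply/and3P.
Qed.

Lemma src_treeE z i y a : sval z = inr (i, rcons y a) ->
  sval (src z) = if y is [::] then inl i else inr (i, y).
Proof.
move=> zE; have z_inX := tree_inX zE.
case: z zE => v v_valid /= zE; subst v; rewrite /Fx_src /=.
case: y z_inX v_valid => [|b y] //= z_inX v_valid.
by rewrite size_rcons val_insubd belast_rcons /Fvalid /= (inX_rcons z_inX).
Qed.

Lemma label_treeE z i y a : sval z = inr (i, rcons y a) -> label z = a.
Proof. by case: z => v v_valid /= zE; subst v; rewrite /Fx_phiE /= last_rcons. Qed.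

Lemma Fx_deterministic : deterministic F.
Proof.
have cyc_tree (k : 'I_m) (z : FxV s r sp x) i y a : sval z = inr (i, rcons y a) ->
    src (cyc k) = src z -> label (cyc k) = label z -> False.
  move=> zE /(congr1 sval); rewrite src_cyc (label_treeE zE) /= (src_treeE zE).
  case: y zE => [|b y] zE // [ik] xk_a.
  by move: (tree_inX zE); rewrite /inX /= -xk_a -ik ord_predK eqxx !andbF.
move=> f1 f2 /=; case: (Fx_vertexP f1) => [k1 ->|i1 y1 a1 f1E];
  case: (Fx_vertexP f2) => [k2 ->|i2 y2 a2 f2E].
- by rewrite !src_cyc => /cyc_inj/ord_pred_inj ->.
- by move=> src12 label12; case: (cyc_tree _ _ _ _ _ f2E src12 label12).
- by move=> src12 label12; case: (cyc_tree _ _ _ _ _ f1E (esym src12) (esym label12)).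
- move=> /(congr1 sval); rewrite /= (src_treeE f1E) (src_treeE f2E).
  rewrite (label_treeE f1E) (label_treeE f2E) => src12 a12; apply: val_inj => /=.
  rewrite f1E f2E a12.
  case: y1 {f1E} src12 => [|b1 y1]; case: y2 {f2E} => [|b2 y2] //.
    by case=> ->.
  by case=> -> -> ->.
Qed.

Lemma Fx_rooted_ind (j : 'I_m) (P : FxV s r sp x -> Prop) :
  P (cyc j) -> (forall z, P (src z) -> P z) -> forall z, P z.
Proof.
move=> Pj P_child.
have P_cyc k : P (cyc k).
  have P_iter n : P (cyc (iter n (@ordS m) j)).
    by elim: n => //= n IH; apply: P_child; rewrite src_cycS.
  have -> : k = iter (m - j + k) (@ordS m) j.
    apply: val_inj; rewrite val_iter_ordS addnA subnKC; last exact: ltnW.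
    by rewrite modnDl modn_small.
  exact: P_iter.
move=> z; case: (Fx_vertexP z) => [k -> //|i y a].
elim/last_ind: y z a => [|y b IH] z a zE; apply: P_child; have := src_treeE zE.
  by move=> src_z; have -> : src z = cyc i by apply: val_inj.
case yb: (rcons y b) => [|c y'] src_z; first by move/(congr1 size): yb; rewrite size_rcons.
by apply: (IH _ b); rewrite src_z -yb.
Qed.

Definition tree_vertex (z : FxV s r sp x) : bool := if sval z is inr _ then true else false.

(* A real cycle edge x_c moves w_{i,y} down to w_{i,y x_c} or up from
   w_{i,y x_c^*}; either way it raises this weight by one. *)
Definition word_weight (y : seq (dedge Ed)) : int :=
  \sum_(a <- y) (if a.2 then -1 else 1).

Definition weight (z : FxV s r sp x) : int :=
  if sval z is inr (_, y) then word_weight y else 0.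

Lemma weight_src z i y a : sval z = inr (i, rcons y a) -> y != [::] ->
  tree_vertex (src z) /\ weight z = weight (src z) + (if a.2 then -1 else 1).
Proof.
move=> zE; rewrite /tree_vertex /weight zE (src_treeE zE).
by case: y zE => // b y _ _; rewrite /word_weight -cats1 big_cat big_seq1.
Qed.

Lemma act_cycle_edge_raises c :
  raises tree_vertex weight (act s sp (GE V (x c)) : W -> W).
Proof.
move=> t; rewrite act_basisE /act_basis.
case E1: (pick_some _) => [f|].
  have [f_t fE] := pick_someP E1; right; exists f => // f_tree.
  case: (Fx_vertexP f) f_tree => [k -> //|i y a fT _].
  rewrite /= (label_treeE fT) in fE; subst a.
  have [y0|y_nnil] := eqVneq y [::].
    move: (tree_inX fT); rewrite y0 /inX /basis_word /= /adj_ok /= /rd /sd /= !andbT.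
    case/andP=> /eqP; rewrite cycle_rs => ri_sc.
    by rewrite (cycle_s_inj ri_sc) eqxx.
  have [src_tree ->] := weight_src fT y_nnil; rewrite -f_t; split=> //.
  by rewrite ltrDl.
case E2: (pick_some _) => [f|]; last by left.
have [f_t tE] := pick_someP E2; rewrite /= in f_t tE; subst f.
right; exists (src t) => // src_tree.
case: (Fx_vertexP t) src_tree tE => [k ->|i y a tT]; first by rewrite src_cyc.
rewrite (label_treeE tT) => src_tree aE; subst a.
have [y0|y_nnil] := eqVneq y [::]; first by rewrite /tree_vertex (src_treeE tT) y0 in src_tree.
have [_ ->] := weight_src tT y_nnil; split; first by rewrite /tree_vertex tT.
by rewrite gtrDl.
Qed.

Lemma acts_cycle_edges_raises (cs : seq 'I_m) : cs != [::] ->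
  raises tree_vertex weight (acts s sp [seq GE V (x c) | c <- cs] : W -> W).
Proof.
elim: cs => // c [|c' cs] IH _; first exact: act_cycle_edge_raises.
apply: raises_comp (act_cycle_edge_raises c) (IH isT).
exact: acts0 s sp K F _.
Qed.

Definition cycle_walk (j : 'I_m) (n : nat) : seq (gen V Ed) :=
  [seq GE V (x c) | c <- traject (@ordS m) (ordS j) n].

Lemma cycle_walkS j n : cycle_walk j n.+1 = GE V (x (ordS j)) :: cycle_walk (ordS j) n.
Proof. by []. Qed.

Lemma acts_cycle_walk j n :
  acts s sp (cycle_walk j n) (<< cyc j >> : W) = << cyc (iter n (@ordS m) j) >> :> W.
Proof.
elim: n j => [|n IH] j; first by rewrite /cycle_walk /acts.
have step : act s sp (GE V (x (ordS j))) (<< cyc j >> : W) = << cyc (ordS j) >> :> W.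
  rewrite -[in LHS](src_cycS j) act_basisE.
  have -> : GE V (x (ordS j)) = letter (label (cyc (ordS j))) by [].
  exact: (act_basis_edge s sp K Fx_deterministic (cyc (ordS j))).
by rewrite cycle_walkS acts_cons {}step {}IH iterSr.
Qed.

Lemma Fx_endo_root_eigen (h : W -> W) (j : 'I_m) :
  is_endo s sp h -> exists a : K, h << cyc j >> = a *: << cyc j >>.
Proof.
move=> h_endo; set u := h << cyc j >>.
have walk_fixed : acts s sp (cycle_walk j m) u = u.
  by rewrite -endo_acts // acts_cycle_walk iter_ordS_period.
have vertex_fixed : act s sp (GV Ed (r (x j))) u = u.
  by case: h_endo => _ _ hA; rewrite -hA act_basisE /act_basis /= eqxx.
have walk_nnil : traject (@ordS m) (ordS j) m != [::].
  by rewrite -size_eq0 size_traject -lt0n cycle_gt0.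
exists u@_(cyc j); apply: malg_supp1 => z zu.
have := raises_fixed_supp (actsD s sp (F:=F) _) (actsZ s sp (F:=F) _)
  (acts_cycle_edges_raises walk_nnil) walk_fixed zu.
case: (Fx_vertexP z) zu => [k -> zu _|i y a zE]; last by rewrite /tree_vertex zE.
have := act_vertex_fixed_supp vertex_fixed zu.
by rewrite /= /Fx_phiV /= !cycle_rs => /cycle_s_inj/ordS_inj ->.
Qed.

Lemma Fx_endo_scalar (h : W -> W) : is_endo s sp h -> exists a : K, forall u : W, h u = a *: u.
Proof.
move=> h_endo; pose j := Ordinal cycle_gt0.
have [a h_root] := Fx_endo_root_eigen j h_endo.
exists a; case: (h_endo) => hD hZ _; apply: (linop_scalar_on_basis hD hZ).
apply: (@Fx_rooted_ind j (fun z => h << z >> = a *: << z >>)) => [|z].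
  exact: h_root.
exact: (endo_scalar_edge Fx_deterministic h_endo).
Qed.

Definition exit_subtree (i0 : 'I_m) (e0 : Ed) : pred (FxV s r sp x) :=
  fun z => if sval z is inr (i, y) then (i == i0) && (head (real (x i0)) y == real e0)
           else false.

Lemma exit_subtree_child i0 e0 z : exit_subtree i0 e0 (src z) -> exit_subtree i0 e0 z.
Proof.
case: (Fx_vertexP z) => [k ->|i y a zE]; first by rewrite src_cyc.
by rewrite /exit_subtree (src_treeE zE) zE; case: y zE.
Qed.

Lemma exit_subtree_parent i0 e0 z :
  exit_subtree i0 e0 z -> label z <> real e0 -> exit_subtree i0 e0 (src z).
Proof.
case: (Fx_vertexP z) => [k ->|i y a zE]; first by [].
rewrite (label_treeE zE) /exit_subtree (src_treeE zE) zE.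
by case: y zE => [|b y] zE //= /andP[_ /eqP].
Qed.

Lemma Fx_not_simple (e0 : Ed) (j : 'I_m) : special s sp (x j) ->
  s e0 = s (x j) -> e0 <> x j -> ~ simple_module s sp K F.
Proof.
move=> xj_special e0_src e0_ne [_ simple].
have e0_nonspecial : ~~ special s sp e0.
  by move: xj_special; rewrite /special -e0_src => /eqP <-; apply/eqP.
pose i0 := ord_pred j; pose S : pred (FV F) := exit_subtree i0 e0.
have root_valid : Fvalid s r sp x (inr (i0, [:: real e0])).
  rewrite /Fvalid /inX /basis_word /= /adj_ok /rd /sd /= !andbT ord_predK.
  by rewrite cycle_rs ord_predK e0_src eqxx; apply/eqP => -[].
pose root : FxV s r sp x := exist (Fvalid s r sp x) _ root_valid.
have S_submodule : submodule s sp (supported_in S : W -> Prop).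
  apply: (supported_submodule K) => [f|f Sf f_lifts]; first exact: exit_subtree_child.
  apply: exit_subtree_parent => // fE; rewrite /= fE /= in f_lifts.
  by rewrite (negbTE e0_nonspecial) in f_lifts.
case: (simple _ S_submodule) => [S_zero|S_all].
  have : << root >> = 0 :> W.
    by apply: S_zero; apply: supportedU; rewrite /S /exit_subtree /= !eqxx.
  by move/eqP; rewrite monalgU_eq0 oner_eq0.
have := S_all << cyc i0 >> (cyc i0).
by rewrite msuppU oner_eq0 in_fset1 eqxx => /(_ isT).
Qed.

End ExtendedRepresentationGraph.

Theorem theorem6p1 (K : fieldType) (V Ed : choiceType) (s r : Ed -> V)
  (sp : V -> Ed) (m : nat) (x : 'I_m -> Ed) :
  row_finite s ->
  special_choice s sp ->
  is_cycle s r x ->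
  (forall i, special s sp (x i)) ->
  has_exit s x ->
  ~ simple_module s sp K (Fx s r sp x) /\ End_iso_field s sp K (Fx s r sp x).
Proof.
move=> _ _ x_cycle x_special [e0 [j [e0_src e0_ne]]]; split.
  exact: (Fx_not_simple x_cycle (x_special j) e0_src e0_ne).
apply: (End_iso_field_of_scalar (F := Fx s r sp x) (FxV_inl s r sp x j)).
exact: Fx_endo_scalar x_cycle.
Qed.
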